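(* Let $R$ be a finite Frobenius ring and $\mathcal{P}_{\mathrm{hom}}=P_1\mid\cdots\mid P_M$ its homogeneous weight partition. Then the left Krawtchouk coefficients $\sum_{a\in P_m}\chi(ab)$ ($b\in R$, $1\le m\le M$), and hence the left $\chi$-dual partition of $\mathcal{P}_{\mathrm{hom}}$, do not depend on the choice of the generating character $\chi$ of $R$. The same holds for the right Krawtchouk coefficients $\sum_{a\in P_m}\chi(ba)$ and the right $\chi$-dual partition.
   Context: A character of $R$ is a group homomorphism $(R,+)\to\mathbb{C}^*$; the character group $\widehat{R}$ is an $R$-$R$-bimodule via $(r\cdot\chi)(v)=\chi(vr)$ and $(\chi\cdot r)(v)=\chi(rv)$. $R$ is Frobenius iff there is a character $\chi$ with $\widehat{R}=R\cdot\chi$ (equivalently $\widehat{R}=\chi\cdot R$); such $\chi$ is called a generating character. $\mathcal{P}_{\mathrm{hom}}$ is the partition of $R$ into level sets of the normalized homogeneous weight $\omega$ (the unique map $R\to\mathbb{R}$ with $\omega(0)=0$, $\omega(x)=\omega(y)$ whenever $Rx=Ry$, and $\sum_{y\in Rx}\omega(y)=|Rx|$ for $x\ne0$). For a partition $\mathcal{P}=P_1\mid\cdots\mid P_M$ of $R$, the left $\chi$-dual partition is defined by: $b\sim b'$ iff $\sum_{a\in P_m}\chi(ab)=\sum_{a\in P_m}\chi(ab')$ for all $m$; the right $\chi$-dual partition by: $b\sim b'$ iff $\sum_{a\in P_m}\chi(ba)=\sum_{a\in P_m}\chi(b'a)$ for all $m$. *)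

From mathcomp Require Import all_boot all_order all_algebra all_field.
Set Implicit Arguments. Unset Strict Implicit. Unset Printing Implicit Defensive.
Import Order.TTheory GRing.Theory Num.Theory.
Local Open Scope ring_scope.

Section Frob.
Variable R : finNzRingType.

Definition is_character (chi : R -> algC) : Prop :=
  (forall x y, chi (x + y) = chi x * chi y) /\ (forall x, chi x != 0).

Definition lact (r : R) (chi : R -> algC) : R -> algC := fun v => chi (v * r).

Definition generating_character (chi : R -> algC) : Prop :=
  is_character chi /\
  forall psi, is_character psi -> exists r : R, forall v, psi v = lact r chi v.

Definition frobenius : Prop := exists chi, generating_character chi.

Definition lprinc (x : R) : {set R} := [set r * x | r : R].

Definition normalized_homogeneous_weight (omega : R -> algC) : Prop :=
  [/\ forall x, omega x \is Num.real,
      omega 0 = 0,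
      forall x y, lprinc x = lprinc y -> omega x = omega y &
      forall x, x != 0 -> \sum_(y in lprinc x) omega y = #|lprinc x|%:R].

Definition level_partition (omega : R -> algC) : {set {set R}} :=
  [set [set a | omega a == omega c] | c : R].

Definition left_kraw (chi : R -> algC) (P : {set R}) (b : R) : algC :=
  \sum_(a in P) chi (a * b).
Definition right_kraw (chi : R -> algC) (P : {set R}) (b : R) : algC :=
  \sum_(a in P) chi (b * a).

(* left / right chi-dual partitions, given as equivalence relations on R *)
Definition left_dual_rel (chi : R -> algC) (PP : {set {set R}}) (b b' : R) : Prop :=
  forall P, P \in PP -> left_kraw chi P b = left_kraw chi P b'.
Definition right_dual_rel (chi : R -> algC) (PP : {set {set R}}) (b b' : R) : Prop :=
  forall P, P \in PP -> right_kraw chi P b = right_kraw chi P b'.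

End Frob.

From mathcomp Require Import all_boot all_order all_algebra all_field all_fingroup all_character.
Import Order.TTheory GRing.Theory Num.Theory.
Local Open Scope ring_scope.
Set Implicit Arguments. Unset Strict Implicit.

(* Characters of the finite abelian group (R,+) separate points, so a
   generating character chi has trivial left and right annihilators; hence
   v |-> chi (r v) is injective in r and, by counting, every character is of
   this form as well as of the form v |-> chi (v r).  Two generating characters
   therefore differ by a unit u on either side: chi' v = chi (w v) = chi (v u).
   The homogeneous weight is invariant under a |-> w a (since R w a = R a) and,
   by its uniqueness, under a |-> a u, so these maps permute every level set
   and the Krawtchouk coefficients agree after reindexing. *)

Lemma character_separates (R : finNzRingType) (x : R) : x != 0 ->
  exists psi, is_character psi /\ psi x != 1.
Proof.
move=> x_neq0; pose G := [set: FinRing.NzRing_to_finGroup R].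
have lin i : 'chi[G]_i \is a linear_char.
  by apply/char_abelianP; apply: FinRing.zmod_abelian.
have [/existsP [i chi_x]|] := boolP [exists i : Iirr G, 'chi_i x != 1].
  exists (fun r : R => 'chi_i r); split=> //; split=> [a b|a].
    by rewrite -(lin_charM (lin i)) ?inE.
  by rewrite lin_char_neq0 ?inE.
rewrite negb_exists => /forallP all1.
(* Otherwise the second orthogonality relation at the pair (x, 1) fails. *)
have := second_orthogonality_relation x (group1 G).
rewrite class1G inE (negbTE x_neq0) mulr0n (eq_bigr (fun _ => 1)); last first.
  move=> i _; move: (all1 i); rewrite negbK => /eqP ->.
  by rewrite lin_char1 ?rmorph1 ?mulr1.
by rewrite sumr_const card_ord => /eqP; rewrite pnatr_eq0.
Qed.

Section GeneratingCharacter.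
Variable R : finNzRingType.
Implicit Types (chi psi : R -> algC) (r v x : R).

Lemma characterB1 chi a b : is_character chi -> chi a = chi b -> chi (a - b) = 1.
Proof.
case=> chiD chi_neq0 eq_ab; apply: (mulIf (chi_neq0 b)).
by rewrite -chiD subrK mul1r.
Qed.

Lemma character_lmul chi r : is_character chi -> is_character (fun v => chi (r * v)).
Proof.
by case=> chiD chi_neq0; split=> [x y|x]; rewrite ?mulrDr ?chiD ?chi_neq0.
Qed.

Variable chi : R -> algC.
Hypothesis gen_chi : generating_character chi.

Lemma gen_char_ann_l x : (forall v, chi (x * v) = 1) -> x = 0.
Proof.
move=> chi_x1; apply: contraTeq isT => x_neq0.
have [psi [psi_char psi_x]] := character_separates x_neq0.
have [r psi_r] := gen_chi.2 _ psi_char.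
by move: psi_x; rewrite psi_r /lact chi_x1 eqxx.
Qed.

Lemma gen_char_lmul_inj r r' : (forall v, chi (r * v) = chi (r' * v)) -> r = r'.
Proof.
move=> eq_rr'; apply/eqP; rewrite -subr_eq0; apply/eqP/gen_char_ann_l => v.
by rewrite mulrBl; apply: characterB1; [exact: gen_chi.1 | apply: eq_rr'].
Qed.

Lemma gen_char_lmul_surj psi :
  is_character psi -> exists w, forall v, psi v = chi (w * v).
Proof.
move=> psi_char.
pose lchi r : {ffun R -> algC} := [ffun v => chi (r * v)].
pose rchi r : {ffun R -> algC} := [ffun v => chi (v * r)].
have lchi_uniq : uniq (map lchi (enum R)).
  rewrite map_inj_uniq ?enum_uniq // => r r' /ffunP eq_rr'.
  by apply: gen_char_lmul_inj => v; have := eq_rr' v; rewrite !ffunE.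
have lchi_sub : {subset map lchi (enum R) <= map rchi (enum R)}.
  move=> _ /mapP [r _ ->]; have [r' eq_r'] := gen_chi.2 _ (character_lmul r gen_chi.1).
  by apply/mapP; exists r'; rewrite ?mem_enum //; apply/ffunP => v; rewrite !ffunE eq_r'.
have [|_ lchi_eq] := uniq_min_size lchi_uniq lchi_sub; first by rewrite !size_map.
have [r psi_r] := gen_chi.2 _ psi_char.
have : rchi r \in map lchi (enum R) by rewrite lchi_eq map_f ?mem_enum.
case/mapP => w _ /ffunP rchi_w; exists w => v.
by have := rchi_w v; rewrite !ffunE psi_r.
Qed.

Lemma gen_char_ann_r x : (forall v, chi (v * x) = 1) -> x = 0.
Proof.
move=> chi_x1; apply: contraTeq isT => x_neq0.
have [psi [psi_char psi_x]] := character_separates x_neq0.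
have [w psi_w] := gen_char_lmul_surj psi_char.
by move: psi_x; rewrite psi_w chi_x1 eqxx.
Qed.

Lemma gen_char_rmul_inj r r' : (forall v, chi (v * r) = chi (v * r')) -> r = r'.
Proof.
move=> eq_rr'; apply/eqP; rewrite -subr_eq0; apply/eqP/gen_char_ann_r => v.
by rewrite mulrBr; apply: characterB1; [exact: gen_chi.1 | apply: eq_rr'].
Qed.

End GeneratingCharacter.

Lemma gen_chars_lunit (R : finNzRingType) (chi chi' : R -> algC) :
  generating_character chi -> generating_character chi' ->
  exists w w', (forall v, chi' v = chi (w * v)) /\ w' * w = 1.
Proof.
move=> gen_chi gen_chi'.
have [w chi'_w] := gen_char_lmul_surj gen_chi gen_chi'.1.
have [w' chi_w'] := gen_char_lmul_surj gen_chi' gen_chi.1.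
exists w, w'; split=> //; apply/esym/(gen_char_lmul_inj gen_chi') => v.
by rewrite mul1r -mulrA -chi_w' -chi'_w.
Qed.

Lemma gen_chars_runit (R : finNzRingType) (chi chi' : R -> algC) :
  generating_character chi -> generating_character chi' ->
  exists u s, [/\ forall v, chi' v = chi (v * u), u * s = 1 & s * u = 1].
Proof.
move=> gen_chi gen_chi'.
have [u chi'_u] := gen_chi.2 _ gen_chi'.1.
have [s chi_s] := gen_chi'.2 _ gen_chi.1.
rewrite /lact in chi'_u chi_s; exists u, s; split=> //; apply/esym.
  by apply/(gen_char_rmul_inj gen_chi') => v; rewrite mulr1 mulrA -chi_s -chi'_u.
by apply/(gen_char_rmul_inj gen_chi) => v; rewrite mulr1 mulrA -chi'_u -chi_s.
Qed.

Section HomogeneousWeight.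
Variable R : finNzRingType.
Implicit Types (omega : R -> algC) (x y : R).

(* [normalized_homogeneous_weight] minus realness, which uniqueness does not need. *)
Definition homogeneous_weight_axioms omega :=
  [/\ omega 0 = 0, forall x y, lprinc x = lprinc y -> omega x = omega y &
      forall x, x != 0 -> \sum_(y in lprinc x) omega y = #|lprinc x|%:R].

Lemma lprinc_id x : x \in lprinc x.
Proof. by apply/imsetP; exists 1; rewrite ?mul1r. Qed.

Lemma lprinc_subset x y : y \in lprinc x -> lprinc y \subset lprinc x.
Proof.
case/imsetP => r _ ->; apply/subsetP => _ /imsetP [t _ ->].
by apply/imsetP; exists (t * r); rewrite ?mulrA.
Qed.

Lemma homogeneous_weight_unique omega1 omega2 :
  homogeneous_weight_axioms omega1 -> homogeneous_weight_axioms omega2 ->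
  omega1 =1 omega2.
Proof.
case=> omega1_0 omega1_eq omega1_sum [omega2_0 omega2_eq omega2_sum] x.
(* Strong induction on |Rx|: the classes Ry strictly inside Rx are settled. *)
elim: {x}#|lprinc x|.+1 {-2}x (ltnSn #|lprinc x|) => // n IHn x Rx_lt.
have [->|x_neq0] := eqVneq x 0; first by rewrite omega1_0 omega2_0.
have : \sum_(y in lprinc x) (omega1 y - omega2 y) = 0.
  by rewrite sumrB omega1_sum // omega2_sum // subrr.
rewrite (bigID (fun y => lprinc y == lprinc x)) /= [X in _ + X]big1 ?addr0.
  rewrite (eq_bigr (fun _ => omega1 x - omega2 x)); last first.
    by move=> y /andP [_ /eqP Ryx]; rewrite (omega1_eq _ _ Ryx) (omega2_eq _ _ Ryx).
  rewrite sumr_const => /eqP; rewrite mulrn_eq0 subr_eq0 => /orP [/eqP|/eqP //].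
  by move/card0_eq/(_ x); rewrite unfold_in lprinc_id eqxx.
move=> y /andP [y_in Ryx]; apply/eqP; rewrite subr_eq0; apply/eqP/IHn.
have Ry_proper : lprinc y \proper lprinc x by rewrite properEneq Ryx lprinc_subset.
exact: leq_trans (proper_card Ry_proper) _.
Qed.

Variable omega : R -> algC.
Hypothesis omega_hom : normalized_homogeneous_weight omega.

Lemma hom_weight_lmul w w' : w' * w = 1 -> forall a, omega (w * a) = omega a.
Proof.
case: omega_hom => _ _ omega_eq _ w'w a; apply: omega_eq.
apply/eqP; rewrite eqEsubset; apply/andP; split; apply/lprinc_subset/imsetP.
  by exists w.
by exists w'; rewrite // mulrA w'w mul1r.
Qed.

Lemma hom_weight_rmul u s : u * s = 1 -> s * u = 1 ->
  forall a, omega (a * u) = omega a.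
Proof.
case: omega_hom => _ omega_0 omega_eq omega_sum us su.
have mulu_inj : injective (fun y : R => y * u).
  by move=> y y' /(congr1 (fun z => z * s)); rewrite -!mulrA us !mulr1.
have lprincMu x : lprinc (x * u) = (fun y => y * u) @: lprinc x.
  apply/setP => t; apply/imsetP/imsetP => [[r _ ->]|[_ /imsetP [r _ ->] ->]].
    by exists (r * x); [apply/imsetP; exists r | rewrite mulrA].
  by exists r; rewrite ?mulrA.
apply: homogeneous_weight_unique; last by split.
split=> [|x y|x x_neq0]; first by rewrite mul0r.
  by move=> Rxy; apply: omega_eq; rewrite !lprincMu Rxy.
have xu_neq0 : x * u != 0.
  by apply: contra x_neq0 => /eqP xu0; rewrite -[x]mulr1 -us mulrA xu0 mul0r.
rewrite -(big_imset omega) /=; last by move=> ? ? _ _; apply: mulu_inj.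
by rewrite -lprincMu omega_sum // lprincMu card_imset.
Qed.

End HomogeneousWeight.

Section Krawtchouk.
Variables (R : finNzRingType) (omega : R -> algC).
Hypothesis omega_hom : normalized_homogeneous_weight omega.
Variables chi chi' : R -> algC.
Hypotheses (gen_chi : generating_character chi) (gen_chi' : generating_character chi').

Lemma left_kraw_gen_char P b : P \in level_partition omega ->
  left_kraw chi P b = left_kraw chi' P b.
Proof.
case/imsetP => c _ ->.
have [w [w' [chi'_w w'w]]] := gen_chars_lunit gen_chi gen_chi'.
have mulw_inj : injective (fun a : R => w * a).
  by move=> y y' /(congr1 (fun z => w' * z)); rewrite !mulrA w'w !mul1r.
rewrite /left_kraw (reindex_inj mulw_inj) /=.
apply: eq_big => [a|a _]; first by rewrite !inE (hom_weight_lmul omega_hom w'w).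
by rewrite chi'_w mulrA.
Qed.

Lemma right_kraw_gen_char P b : P \in level_partition omega ->
  right_kraw chi P b = right_kraw chi' P b.
Proof.
case/imsetP => c _ ->.
have [u [s [chi'_u us su]]] := gen_chars_runit gen_chi gen_chi'.
have mulu_inj : injective (fun a : R => a * u).
  by move=> y y' /(congr1 (fun z => z * s)); rewrite -!mulrA us !mulr1.
rewrite /right_kraw (reindex_inj mulu_inj) /=.
apply: eq_big => [a|a _]; first by rewrite !inE (hom_weight_rmul omega_hom us su).
by rewrite chi'_u mulrA.
Qed.

End Krawtchouk.

Theorem corollary5p3 (R : finNzRingType) (omega : R -> algC)
  (chi chi' : R -> algC) :
  frobenius R ->
  normalized_homogeneous_weight omega ->
  generating_character chi -> generating_character chi' ->
  [/\ (forall P b, P \in level_partition omega ->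
          left_kraw chi P b = left_kraw chi' P b),
      (forall b b', left_dual_rel chi (level_partition omega) b b' <->
                    left_dual_rel chi' (level_partition omega) b b'),
      (forall P b, P \in level_partition omega ->
          right_kraw chi P b = right_kraw chi' P b) &
      (forall b b', right_dual_rel chi (level_partition omega) b b' <->
                    right_dual_rel chi' (level_partition omega) b b')].
Proof.
(* [frobenius R] is implied by the existence of [chi]. *)
move=> _ omega_hom gen_chi gen_chi'.
have left_eq := left_kraw_gen_char omega_hom gen_chi gen_chi'.
have right_eq := right_kraw_gen_char omega_hom gen_chi gen_chi'.
split=> // b b'; split=> eq_bb' P P_in.
- by rewrite -!left_eq // eq_bb'.
- by rewrite !left_eq // eq_bb'.
- by rewrite -!right_eq // eq_bb'.
- by rewrite !right_eq // eq_bb'.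
Qed.
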